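(* Let $f:\mathbb{R}^2\to\mathbb{R}^2$ be a Topologically Anosov homeomorphism which is the time one map of a flow $(f_t)_{t\in\mathbb{R}}$ defined by a $C^1$ vector field on $\mathbb{R}^2$. Then the flow has no (non-stationary) periodic orbits and no finite connections.
   Context: A homeomorphism $f:\mathbb{R}^2\to\mathbb{R}^2$ is Topologically Anosov (TA) if: (i) there is a continuous strictly positive $\epsilon:\mathbb{R}^2\to\mathbb{R}$ such that for all $x\neq y$ there is $k\in\mathbb{Z}$ with $\|f^k(x)-f^k(y)\|>\epsilon(f^k(x))$; and (ii) for every continuous strictly positive $\epsilon$ there is a continuous strictly positive $\delta$ such that every $\delta$-pseudo-orbit is $\epsilon$-shadowed by an orbit. A $\delta$-pseudo-orbit is a sequence $(x_n)_{n\in\mathbb{Z}}$ with $\|f(x_n)-x_{n+1}\|<\delta(f(x_n))$; it is $\epsilon$-shadowed by the orbit of $x$ if $\|x_n-f^n(x)\|<\epsilon(x_n)$ for all $n$. A connection between singularities $x_1,x_2$ (not necessarily distinct) of the flow is an orbit of a point $x$ with $\alpha(x)=\{x_1\}$ and $\omega(x)=\{x_2\}$ (or vice versa); it is finite if $x_1,x_2\in\mathbb{R}^2$ (i.e. neither is the point at infinity of the extension of the flow to $\mathbb{S}^2=\mathbb{R}^2\cup\{\infty\}$). *)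

From Stdlib Require Import Reals ZArith.
From Coquelicot Require Import Coquelicot.
Open Scope R_scope.

Definition pt := (R * R)%type.

Definition edist (p q : pt) : R :=
  sqrt ((fst p - fst q) ^ 2 + (snd p - snd q) ^ 2).

Definition is_homeo (f g : pt -> pt) : Prop :=
  (forall p, continuous f p) /\ (forall p, continuous g p) /\
  (forall p, g (f p) = p) /\ (forall p, f (g p) = p).

Fixpoint iter_nat (h : pt -> pt) (n : nat) (x : pt) : pt :=
  match n with O => x | S m => h (iter_nat h m x) end.

Definition iterZ (f g : pt -> pt) (k : Z) (x : pt) : pt :=
  match k with
  | Z0 => x
  | Zpos p => iter_nat f (Pos.to_nat p) x
  | Zneg p => iter_nat g (Pos.to_nat p) x
  end.

Definition pos_cont (e : pt -> R) : Prop :=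
  (forall p, continuous e p) /\ (forall p, 0 < e p).

Definition TA (f : pt -> pt) : Prop :=
  exists g : pt -> pt, is_homeo f g /\
  (exists e : pt -> R, pos_cont e /\
     forall x y, x <> y ->
       exists k : Z, edist (iterZ f g k x) (iterZ f g k y) > e (iterZ f g k x)) /\
  (forall e : pt -> R, pos_cont e ->
     exists d : pt -> R, pos_cont d /\
       forall xs : Z -> pt,
         (forall n, edist (f (xs n)) (xs (n + 1)%Z) < d (f (xs n))) ->
         exists x, forall n, edist (xs n) (iterZ f g n x) < e (xs n)).

Definition C1_field (V : pt -> pt) : Prop :=
  forall c : pt -> R, (c = fst \/ c = snd) ->
    (forall x y, ex_derive (fun u => c (V (u, y))) x) /\
    (forall x y, ex_derive (fun v => c (V (x, v))) y) /\
    (forall p : pt, continuous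
       (fun q : pt => Derive (fun u => c (V (u, snd q))) (fst q)) p) /\
    (forall p : pt, continuous
       (fun q : pt => Derive (fun v => c (V (fst q, v))) (snd q)) p).

Definition is_flow_of (V : pt -> pt) (phi : R -> pt -> pt) : Prop :=
  (forall x, phi 0 x = x) /\
  (forall x t, is_derive (fun s => fst (phi s x)) t (fst (V (phi t x)))) /\
  (forall x t, is_derive (fun s => snd (phi s x)) t (snd (V (phi t x)))).

Definition singular (V : pt -> pt) (x : pt) : Prop := V x = (0, 0).

Definition omega_lim (phi : R -> pt -> pt) (x y : pt) : Prop :=
  forall eps T, 0 < eps -> exists t, T <= t /\ edist (phi t x) y < eps.

Definition alpha_lim (phi : R -> pt -> pt) (x y : pt) : Prop :=
  forall eps T, 0 < eps -> exists t, t <= T /\ edist (phi t x) y < eps.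

Definition finite_connection (V : pt -> pt) (phi : R -> pt -> pt) (x x1 x2 : pt) : Prop :=
  ~ singular V x /\ singular V x1 /\ singular V x2 /\
  (forall y, alpha_lim phi x y <-> y = x1) /\
  (forall y, omega_lim phi x y <-> y = x2).

(* Let [e] be an expansivity function of [f].  If the orbit of a non-singular point [x]
   is periodic or a finite connection, its closure is compact, so [e] is bounded below
   along it by some [m > 0], and the orbit is uniformly continuous in time: for some
   [sg > 0], [phi t x] and [phi (t + s) x] are [m]-close for all [t] and [0 < s < sg].
   Since [x] is not singular it moves, so [phi s x <> x] for such an [s]; but
   [f^k = phi k], hence [f^k x] and [f^k (phi s x) = phi (k + s) x] stay [m]-close for
   every integer [k], contradicting expansivity.  The identity [f^k = phi k] rests on
   the group law of the flow, i.e. on uniqueness of solutions of the locally Lipschitz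
   equation [x' = V x]; the convergence of a finite connection to its end points comes
   from its singleton limit sets by a Bolzano-Weierstrass argument. *)

From Pilot Require Import Defs.
From Stdlib Require Import Reals Rgeom ZArith Lra Classical.
From Coquelicot Require Import Coquelicot.
Open Scope R_scope.

(** * Curves in the plane *)

Lemma edist_dist_euc p q : edist p q = dist_euc (fst p) (snd p) (fst q) (snd q).
Proof. unfold edist, dist_euc. rewrite !Rsqr_pow2. reflexivity. Qed.

Lemma edist_ge_0 p q : 0 <= edist p q.
Proof. apply sqrt_pos. Qed.

Lemma edist_refl p : edist p p = 0.
Proof. rewrite edist_dist_euc. apply distance_refl. Qed.

Lemma edist_sym p q : edist p q = edist q p.
Proof. rewrite !edist_dist_euc. apply distance_symm. Qed.

Lemma edist_triangle p q r : edist p r <= edist p q + edist q r.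
Proof. rewrite !edist_dist_euc. apply triangle. Qed.

Lemma Rabs_fst_le_edist p q : Rabs (fst p - fst q) <= edist p q.
Proof.
  unfold edist. rewrite <- sqrt_Rsqr_abs. apply sqrt_le_1_alt.
  unfold Rsqr. pose proof (pow2_ge_0 (snd p - snd q)). lra.
Qed.

Lemma Rabs_snd_le_edist p q : Rabs (snd p - snd q) <= edist p q.
Proof.
  unfold edist. rewrite <- sqrt_Rsqr_abs. apply sqrt_le_1_alt.
  unfold Rsqr. pose proof (pow2_ge_0 (fst p - fst q)). lra.
Qed.

Lemma edist_le_Rabs_sum p q : edist p q <= Rabs (fst p - fst q) + Rabs (snd p - snd q).
Proof.
  unfold edist. set (a := fst p - fst q). set (b := snd p - snd q).
  pose proof (Rabs_pos a). pose proof (Rabs_pos b).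
  rewrite <- (sqrt_pow2 (Rabs a + Rabs b)) by lra. apply sqrt_le_1_alt.
  rewrite <- (pow2_abs a), <- (pow2_abs b). nra.
Qed.

Lemma edist_eq_0 p q : edist p q = 0 -> p = q.
Proof.
  intros H. pose proof (Rabs_fst_le_edist p q). pose proof (Rabs_snd_le_edist p q).
  pose proof (Rabs_pos (fst p - fst q)). pose proof (Rabs_pos (snd p - snd q)).
  apply injective_projections; apply Rminus_diag_uniq, Rabs_eq_0; lra.
Qed.

Lemma continuous_edist_ball (e : pt -> R) p : continuous e p ->
  forall eps, 0 < eps -> exists r, 0 < r /\ forall q, edist q p < r -> Rabs (e q - e p) < eps.
Proof.
  intros He eps Heps.
  destruct (He (fun y => Rabs (y - e p) < eps)) as [r Hr].
  { exists (mkposreal eps Heps). intros y Hy. exact Hy. }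
  exists r. split; [apply cond_pos|]. intros q Hq. apply Hr. split.
  - eapply Rle_lt_trans; [apply Rabs_fst_le_edist | exact Hq].
  - eapply Rle_lt_trans; [apply Rabs_snd_le_edist | exact Hq].
Qed.

Lemma continuity_pt_intro (h : R -> R) t :
  (forall eps, 0 < eps ->
   exists d, 0 < d /\ forall s, Rabs (s - t) < d -> Rabs (h s - h t) < eps) ->
  continuity_pt h t.
Proof.
  intros H eps Heps. destruct (H eps Heps) as [d [Hd Hh]].
  exists d. split; [exact Hd|]. intros s [_ Hs]. apply Hh, Hs.
Qed.

Lemma continuity_pt_elim (h : R -> R) t : continuity_pt h t ->
  forall eps, 0 < eps -> exists d, 0 < d /\ forall s, Rabs (s - t) < d -> Rabs (h s - h t) < eps.
Proof.
  intros H eps Heps. destruct (H eps Heps) as [d [Hd Hh]].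
  exists d. split; [exact Hd|]. intros s Hs.
  destruct (Req_dec s t) as [->|Hne].
  - rewrite Rminus_diag, Rabs_R0. exact Heps.
  - apply Hh. split; [split; [exact I | auto] | exact Hs].
Qed.

Definition continuous_curve (c : R -> pt) : Prop :=
  forall t eps, 0 < eps ->
  exists d, 0 < d /\ forall s, Rabs (s - t) < d -> edist (c s) (c t) < eps.

Lemma continuous_curve_intro (c : R -> pt) :
  (forall t, continuity_pt (fun s => fst (c s)) t) ->
  (forall t, continuity_pt (fun s => snd (c s)) t) ->
  continuous_curve c.
Proof.
  intros C1 C2 t eps Heps.
  destruct (continuity_pt_elim _ _ (C1 t) (eps / 2)) as [d1 [Hd1 D1]]; [lra|].
  destruct (continuity_pt_elim _ _ (C2 t) (eps / 2)) as [d2 [Hd2 D2]]; [lra|].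
  exists (Rmin d1 d2). split; [apply Rmin_pos; assumption|]. intros s Hs.
  pose proof (Rmin_l d1 d2). pose proof (Rmin_r d1 d2).
  eapply Rle_lt_trans; [apply edist_le_Rabs_sum|].
  specialize (D1 s ltac:(lra)). specialize (D2 s ltac:(lra)). lra.
Qed.

Lemma continuous_curve_opp (c : R -> pt) :
  continuous_curve c -> continuous_curve (fun t => c (- t)).
Proof.
  intros Hc t eps Heps. destruct (Hc (- t) eps Heps) as [d [Hd D]].
  exists d. split; [exact Hd|]. intros s Hs. apply D.
  replace (- s - - t) with (- (s - t)) by ring. rewrite Rabs_Ropp. exact Hs.
Qed.

Lemma continuity_pt_edist_curves (c c' : R -> pt) t :
  continuous_curve c -> continuous_curve c' -> continuity_pt (fun s => edist (c s) (c' s)) t.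
Proof.
  intros Hc Hc'. apply continuity_pt_intro. intros eps Heps.
  destruct (Hc t (eps / 2)) as [d [Hd D]]; [lra|].
  destruct (Hc' t (eps / 2)) as [d' [Hd' D']]; [lra|].
  exists (Rmin d d'). split; [apply Rmin_pos; assumption|]. intros s Hs.
  pose proof (Rmin_l d d'). pose proof (Rmin_r d d').
  specialize (D s ltac:(lra)). specialize (D' s ltac:(lra)).
  pose proof (edist_triangle (c s) (c t) (c' s)). pose proof (edist_triangle (c t) (c' t) (c' s)).
  pose proof (edist_triangle (c t) (c s) (c' t)). pose proof (edist_triangle (c s) (c' s) (c' t)).
  rewrite (edist_sym (c t) (c s)) in *. rewrite (edist_sym (c' t) (c' s)) in *.
  apply Rabs_def1; lra.
Qed.

Lemma continuity_pt_comp_curve (e : pt -> R) (c : R -> pt) t :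
  continuous_curve c -> continuous e (c t) -> continuity_pt (fun s => e (c s)) t.
Proof.
  intros Hc He. apply continuity_pt_intro. intros eps Heps.
  destruct (continuous_edist_ball e (c t) He eps Heps) as [r [Hr Dr]].
  destruct (Hc t r Hr) as [d [Hd D]].
  exists d. split; [exact Hd|]. intros s Hs. apply Dr, D, Hs.
Qed.

Lemma continuity_pt_fst_curve (c : R -> pt) t :
  continuous_curve c -> continuity_pt (fun s => fst (c s)) t.
Proof.
  intros Hc. apply continuity_pt_intro. intros eps Heps.
  destruct (Hc t eps Heps) as [d [Hd D]]. exists d. split; [exact Hd|].
  intros s Hs. eapply Rle_lt_trans; [apply Rabs_fst_le_edist | apply D, Hs].
Qed.

Lemma continuity_pt_snd_curve (c : R -> pt) t :
  continuous_curve c -> continuity_pt (fun s => snd (c s)) t.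
Proof.
  intros Hc. apply continuity_pt_intro. intros eps Heps.
  destruct (Hc t eps Heps) as [d [Hd D]]. exists d. split; [exact Hd|].
  intros s Hs. eapply Rle_lt_trans; [apply Rabs_snd_le_edist | apply D, Hs].
Qed.

Lemma continuous_curve_uniform_on (c : R -> pt) a b eps : continuous_curve c -> 0 < eps ->
  exists d, 0 < d /\ forall s t, a <= s <= b -> a <= t <= b -> Rabs (s - t) < d ->
  edist (c s) (c t) < eps.
Proof.
  intros Hc Heps.
  destruct (@Heine_cor2 (fun s => fst (c s)) a b (fun t _ => continuity_pt_fst_curve c t Hc)
    (mkposreal (eps / 2) ltac:(lra))) as [d1 D1].
  destruct (@Heine_cor2 (fun s => snd (c s)) a b (fun t _ => continuity_pt_snd_curve c t Hc)
    (mkposreal (eps / 2) ltac:(lra))) as [d2 D2].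
  simpl in D1, D2.
  exists (Rmin d1 d2). split; [apply Rmin_pos; apply cond_pos|]. intros s t Hs Ht Hst.
  pose proof (Rmin_l d1 d2). pose proof (Rmin_r d1 d2).
  specialize (D1 s t Hs Ht ltac:(lra)). specialize (D2 s t Hs Ht ltac:(lra)).
  eapply Rle_lt_trans; [apply edist_le_Rabs_sum|]. lra.
Qed.

Lemma positive_lower_bound_on (h : R -> R) a b : a <= b ->
  (forall t, continuity_pt h t) -> (forall t, 0 < h t) ->
  exists m, 0 < m /\ forall t, a <= t <= b -> m <= h t.
Proof.
  intros Hab Hc Hpos.
  destruct (continuity_ab_min h a b Hab (fun t _ => Hc t)) as [t0 [Hmin _]].
  exists (h t0). split; [apply Hpos | exact Hmin].
Qed.

(** * Locally Lipschitz fields *)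

Lemma mean_value_bound (h dh : R -> R) a b K :
  (forall x, Rmin a b <= x <= Rmax a b -> is_derive h x (dh x)) ->
  (forall x, Rmin a b <= x <= Rmax a b -> Rabs (dh x) <= K) ->
  Rabs (h b - h a) <= K * Rabs (b - a).
Proof.
  intros Hd Hb.
  destruct (MVT_gen h a b dh) as [c [Hc ->]].
  - intros x Hx. apply Hd. lra.
  - intros x Hx. apply continuity_pt_filterlim, (ex_derive_continuous h).
    exists (dh x). apply Hd, Hx.
  - rewrite Rabs_mult. apply Rmult_le_compat_r; [apply Rabs_pos | apply Hb, Hc].
Qed.

Lemma Rabs_between_lt a b c z r : Rmin a b <= c <= Rmax a b ->
  Rabs (a - z) < r -> Rabs (b - z) < r -> Rabs (c - z) < r.
Proof.
  unfold Rmin, Rmax. intros Hc Ha Hb. apply Rabs_def2 in Ha. apply Rabs_def2 in Hb.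
  apply Rabs_def1; destruct (Rle_dec a b); lra.
Qed.

Definition locally_lipschitz (W : pt -> pt) : Prop :=
  forall p, exists r L, 0 < r /\
  forall a b, edist a p < r -> edist b p < r -> edist (W a) (W b) <= L * edist a b.

Lemma continuous_partials_bounded_near (h : pt -> R) (p : pt) :
  continuous (fun q : pt => Derive (fun u => h (u, snd q)) (fst q)) p ->
  continuous (fun q : pt => Derive (fun v => h (fst q, v)) (snd q)) p ->
  exists r K, 0 < r /\ 0 <= K /\ forall x y, Rabs (x - fst p) < r -> Rabs (y - snd p) < r ->
  Rabs (Derive (fun u => h (u, y)) x) <= K /\ Rabs (Derive (fun v => h (x, v)) y) <= K.
Proof.
  intros Cx Cy.
  destruct (continuous_edist_ball _ p Cx 1 Rlt_0_1) as [r1 [Hr1 B1]].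
  destruct (continuous_edist_ball _ p Cy 1 Rlt_0_1) as [r2 [Hr2 B2]].
  simpl in B1, B2.
  set (Dx := Derive (fun u => h (u, snd p)) (fst p)).
  set (Dy := Derive (fun v => h (fst p, v)) (snd p)).
  pose proof (Rmin_pos r1 r2 Hr1 Hr2). pose proof (Rmin_l r1 r2). pose proof (Rmin_r r1 r2).
  exists (Rmin r1 r2 / 2), (Rabs Dx + Rabs Dy + 1).
  split; [lra|]. split; [pose proof (Rabs_pos Dx); pose proof (Rabs_pos Dy); lra|].
  intros x y Hx Hy.
  assert (Hxy : edist (x, y) p < Rmin r1 r2)
    by (eapply Rle_lt_trans; [apply edist_le_Rabs_sum | simpl; lra]).
  specialize (B1 (x, y) ltac:(lra)). specialize (B2 (x, y) ltac:(lra)). simpl in B1, B2.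
  change (Derive (fun u => h (u, snd p)) (fst p)) with Dx in B1.
  change (Derive (fun v => h (fst p, v)) (snd p)) with Dy in B2.
  pose proof (Rabs_triang_inv (Derive (fun u => h (u, y)) x) Dx).
  pose proof (Rabs_triang_inv (Derive (fun v => h (x, v)) y) Dy).
  pose proof (Rabs_pos Dx). pose proof (Rabs_pos Dy). lra.
Qed.

Lemma continuous_partials_locally_lipschitz (h : pt -> R) :
  (forall x y, ex_derive (fun u => h (u, y)) x) ->
  (forall x y, ex_derive (fun v => h (x, v)) y) ->
  (forall p, continuous (fun q : pt => Derive (fun u => h (u, snd q)) (fst q)) p) ->
  (forall p, continuous (fun q : pt => Derive (fun v => h (fst q, v)) (snd q)) p) ->
  forall p, exists r K, 0 < r /\
  forall a b, edist a p < r -> edist b p < r -> Rabs (h a - h b) <= K * edist a b.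
Proof.
  intros Dx Dy Cx Cy p.
  destruct (continuous_partials_bounded_near h p (Cx p) (Cy p)) as [r [K [Hr [HK Box]]]].
  exists r, (2 * K). split; [exact Hr|].
  intros [a1 a2] [b1 b2] Ha Hb.
  pose proof (Rabs_fst_le_edist (a1, a2) p). pose proof (Rabs_snd_le_edist (a1, a2) p).
  pose proof (Rabs_fst_le_edist (b1, b2) p). pose proof (Rabs_snd_le_edist (b1, b2) p).
  pose proof (Rabs_fst_le_edist (a1, a2) (b1, b2)).
  pose proof (Rabs_snd_le_edist (a1, a2) (b1, b2)).
  simpl in *.
  (* go from [b] to [a] along the coordinate path through the corner [(b1, a2)] *)
  assert (E1 : Rabs (h (a1, a2) - h (b1, a2)) <= K * Rabs (a1 - b1)).
  { apply (mean_value_bound (fun u => h (u, a2)) (fun u => Derive (fun u => h (u, a2)) u)).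
    - intros x _. apply Derive_correct, Dx.
    - intros x Hx. apply Box; [apply (Rabs_between_lt b1 a1) |]; lra. }
  assert (E2 : Rabs (h (b1, a2) - h (b1, b2)) <= K * Rabs (a2 - b2)).
  { apply (mean_value_bound (fun v => h (b1, v)) (fun v => Derive (fun v => h (b1, v)) v)).
    - intros y _. apply Derive_correct, Dy.
    - intros y Hy. apply Box; [| apply (Rabs_between_lt b2 a2)]; lra. }
  replace (h (a1, a2) - h (b1, b2))
    with ((h (a1, a2) - h (b1, a2)) + (h (b1, a2) - h (b1, b2))) by ring.
  eapply Rle_trans; [apply Rabs_triang|]. nra.
Qed.

Lemma C1_field_locally_lipschitz V : C1_field V -> locally_lipschitz V.
Proof.
  intros HV p.
  destruct (HV fst (or_introl eq_refl)) as [Dx1 [Dy1 [Cx1 Cy1]]].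
  destruct (HV snd (or_intror eq_refl)) as [Dx2 [Dy2 [Cx2 Cy2]]].
  destruct (continuous_partials_locally_lipschitz (fun q => fst (V q)) Dx1 Dy1 Cx1 Cy1 p)
    as [r1 [K1 [Hr1 L1]]].
  destruct (continuous_partials_locally_lipschitz (fun q => snd (V q)) Dx2 Dy2 Cx2 Cy2 p)
    as [r2 [K2 [Hr2 L2]]].
  exists (Rmin r1 r2), (K1 + K2). split; [apply Rmin_pos; assumption|].
  intros a b Ha Hb. pose proof (Rmin_l r1 r2). pose proof (Rmin_r r1 r2).
  specialize (L1 a b ltac:(lra) ltac:(lra)). specialize (L2 a b ltac:(lra) ltac:(lra)).
  eapply Rle_trans; [apply edist_le_Rabs_sum | lra].
Qed.

(** * Uniqueness of solutions *)

Lemma R_clopen_forward (P : R -> Prop) t0 : P t0 ->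
  (forall tau, (forall eps, 0 < eps -> exists u, Rabs (u - tau) < eps /\ P u) -> P tau) ->
  (forall tau, P tau -> exists h, 0 < h /\ forall u, Rabs (u - tau) < h -> P u) ->
  forall t, t0 <= t -> P t.
Proof.
  intros P0 Pclosed Popen t1 Ht1. apply NNPP. intros NP1.
  set (E := fun t => t0 <= t <= t1 /\ forall u, t0 <= u <= t -> P u).
  assert (E0 : E t0) by (split; [lra | intros u Hu; replace u with t0 by lra; exact P0]).
  destruct (completeness E) as [tau [Hub Hlub]].
  { exists t1. intros t [Ht _]. lra. }
  { exists t0. exact E0. }
  assert (Htau : t0 <= tau <= t1) by (split; [apply Hub, E0 | apply Hlub; intros t [Ht _]; lra]).
  assert (Below : forall u, t0 <= u < tau -> P u).
  { intros u Hu. apply NNPP. intros NPu.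
    assert (tau <= u) by (apply Hlub; intros t [Ht Pt];
      apply Rnot_lt_le; intros Hut; apply NPu, Pt; lra). lra. }
  assert (Ptau : P tau).
  { apply Pclosed. intros eps Heps. destruct (Req_dec tau t0) as [->|Hne].
    - exists t0. rewrite Rminus_diag, Rabs_R0. split; assumption.
    - exists (Rmax t0 (tau - eps / 2)). pose proof (Rmax_l t0 (tau - eps / 2)).
      assert (Rmax t0 (tau - eps / 2) < tau /\ tau - eps / 2 <= Rmax t0 (tau - eps / 2))
        by (unfold Rmax; destruct Rle_dec; lra).
      split; [apply Rabs_def1 | apply Below]; lra. }
  destruct (Popen tau Ptau) as [h [Hh Near]].
  assert (Hlt : tau < t1) by (destruct (Req_dec tau t1) as [<-|]; [contradiction | lra]).
  set (t := Rmin (tau + h / 2) t1).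
  assert (Ht : tau < t <= t1 /\ t <= tau + h / 2) by (unfold t, Rmin; destruct Rle_dec; lra).
  assert (E t).
  { split; [lra|]. intros u Hu. destruct (Rlt_dec u tau).
    - apply Below. lra.
    - apply Near. apply Rabs_def1; lra. }
  assert (t <= tau) by (apply Hub; assumption). lra.
Qed.

Lemma R_clopen (P : R -> Prop) t0 : P t0 ->
  (forall tau, (forall eps, 0 < eps -> exists u, Rabs (u - tau) < eps /\ P u) -> P tau) ->
  (forall tau, P tau -> exists h, 0 < h /\ forall u, Rabs (u - tau) < h -> P u) ->
  forall t, P t.
Proof.
  intros P0 Pclosed Popen t. destruct (Rle_dec t0 t).
  - apply (R_clopen_forward P t0); assumption.
  - rewrite <- (Ropp_involutive t).
    apply (R_clopen_forward (fun u => P (- u)) (- t0));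
      [rewrite Ropp_involutive; exact P0 | | | lra].
    + intros tau Hc. apply Pclosed. intros eps Heps. destruct (Hc eps Heps) as [u [Hu Pu]].
      exists (- u). split; [|exact Pu]. replace (- u - - tau) with (- (u - tau)) by ring.
      rewrite Rabs_Ropp. exact Hu.
    + intros tau Ptau. destruct (Popen (- tau) Ptau) as [h [Hh Near]].
      exists h. split; [exact Hh|]. intros u Hu. apply Near.
      replace (- u - - tau) with (- (u - tau)) by ring. rewrite Rabs_Ropp. exact Hu.
Qed.

Lemma continuity_pt_adherent_zero (h : R -> R) tau : continuity_pt h tau ->
  (forall eps, 0 < eps -> exists u, Rabs (u - tau) < eps /\ h u = 0) -> h tau = 0.
Proof.
  intros Hc Hz. apply NNPP. intros Hne.
  destruct (continuity_pt_elim h tau Hc (Rabs (h tau))) as [d [Hd D]]; [apply Rabs_pos_lt, Hne|].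
  destruct (Hz d Hd) as [u [Hu Hu0]]. specialize (D u Hu).
  rewrite Hu0, Rminus_0_l, Rabs_Ropp in D. lra.
Qed.

Lemma exists_short_step L d : 0 < d -> exists h, 0 < h /\ h < d /\ 4 * Rabs L * h <= 1.
Proof.
  intros Hd. pose proof (Rabs_pos L).
  assert (HK : 0 < / (4 * (Rabs L + 1))) by (apply Rinv_0_lt_compat; lra).
  set (h := Rmin (d / 2) (/ (4 * (Rabs L + 1)))).
  assert (Hh1 : h <= d / 2) by apply Rmin_l.
  assert (Hh2 : h <= / (4 * (Rabs L + 1))) by apply Rmin_r.
  assert (Hh : 0 < h) by (apply Rmin_pos; [lra | exact HK]).
  exists h. split; [exact Hh|]. split; [lra|].
  apply (Rle_trans _ (4 * (Rabs L + 1) * / (4 * (Rabs L + 1)))).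
  - apply (Rle_trans _ (4 * (Rabs L + 1) * h)); [nra|]. apply Rmult_le_compat_l; lra.
  - right. apply Rinv_r. lra.
Qed.

Definition is_solution (W : pt -> pt) (c : R -> pt) : Prop :=
  forall t, is_derive (fun s => fst (c s)) t (fst (W (c t))) /\
            is_derive (fun s => snd (c s)) t (snd (W (c t))).

Section Solutions.

Variable W : pt -> pt.

Lemma solution_continuous c : is_solution W c -> continuous_curve c.
Proof.
  intros Hc. apply continuous_curve_intro; intros t; apply continuity_pt_filterlim.
  - apply (ex_derive_continuous (fun s => fst (c s))). eexists. apply (Hc t).
  - apply (ex_derive_continuous (fun s => snd (c s))). eexists. apply (Hc t).
Qed.

Lemma solutions_gap_bound c c' t0 t K : is_solution W c -> is_solution W c' -> c t0 = c' t0 ->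
  (forall s, Rmin t0 t <= s <= Rmax t0 t -> edist (W (c s)) (W (c' s)) <= K) ->
  edist (c t) (c' t) <= 2 * K * Rabs (t - t0).
Proof.
  intros Hc Hc' E0 HK.
  assert (G1 : Rabs (fst (c t) - fst (c' t)) <= K * Rabs (t - t0)).
  { replace (fst (c t) - fst (c' t))
      with ((fst (c t) - fst (c' t)) - (fst (c t0) - fst (c' t0))) by (rewrite E0; ring).
    apply (mean_value_bound (fun s => fst (c s) - fst (c' s))
                            (fun s => fst (W (c s)) - fst (W (c' s)))).
    - intros s _. apply @is_derive_minus; [apply Hc | apply Hc'].
    - intros s Hs. eapply Rle_trans; [apply Rabs_fst_le_edist | apply HK, Hs]. }
  assert (G2 : Rabs (snd (c t) - snd (c' t)) <= K * Rabs (t - t0)).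
  { replace (snd (c t) - snd (c' t))
      with ((snd (c t) - snd (c' t)) - (snd (c t0) - snd (c' t0))) by (rewrite E0; ring).
    apply (mean_value_bound (fun s => snd (c s) - snd (c' s))
                            (fun s => snd (W (c s)) - snd (W (c' s)))).
    - intros s _. apply @is_derive_minus; [apply Hc | apply Hc'].
    - intros s Hs. eapply Rle_trans; [apply Rabs_snd_le_edist | apply HK, Hs]. }
  eapply Rle_trans; [apply edist_le_Rabs_sum | lra].
Qed.

Lemma solution_shift c s : is_solution W c -> is_solution W (fun t => c (t + s)).
Proof.
  intros Hc t.
  assert (Hs : is_derive (fun u => u + s) t 1) by (auto_derive; [exact I | ring]).
  destruct (Hc (t + s)) as [H1 H2]. split.
  - rewrite <- scal_one. exact (is_derive_comp (fun u => fst (c u)) _ t _ _ H1 Hs).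
  - rewrite <- scal_one. exact (is_derive_comp (fun u => snd (c u)) _ t _ _ H2 Hs).
Qed.

Hypothesis W_lip : locally_lipschitz W.

Lemma solutions_agree_near c c' tau : is_solution W c -> is_solution W c' -> c tau = c' tau ->
  exists h, 0 < h /\ forall u, Rabs (u - tau) < h -> c u = c' u.
Proof.
  intros Hc Hc' Etau.
  pose proof (solution_continuous c Hc) as Cc. pose proof (solution_continuous c' Hc') as Cc'.
  destruct (W_lip (c tau)) as [r [L [Hr Lip]]].
  destruct (Cc tau r Hr) as [d [Hd D]]. destruct (Cc' tau r Hr) as [d' [Hd' D']].
  rewrite <- Etau in D'.
  destruct (exists_short_step L (Rmin d d') (Rmin_pos d d' Hd Hd')) as [h [Hh [Hhd HhL]]].
  pose proof (Rmin_l d d'). pose proof (Rmin_r d d').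
  set (m := fun u => edist (c u) (c' u)).
  destruct (continuity_ab_maj m (tau - h) (tau + h) ltac:(lra)
    (fun u _ => continuity_pt_edist_curves c c' u Cc Cc')) as [umax [Hmax Humax]].
  (* the gap grows at rate at most [2 |L|] times its maximum over [tau - h, tau + h],
     reached at [umax]; since [2 |L| h <= 1/2], that maximum vanishes *)
  assert (Gap : m umax <= 2 * (Rabs L * m umax) * Rabs (umax - tau)).
  { apply solutions_gap_bound; [exact Hc | exact Hc' | exact Etau |].
    intros s Hs. assert (Hs' : tau - h <= s <= tau + h)
      by (unfold Rmin, Rmax in Hs; destruct Rle_dec in Hs; lra).
    eapply Rle_trans; [apply Lip; [apply D | apply D']; apply Rabs_def1; lra|].
    pose proof (Hmax s Hs'). pose proof (edist_ge_0 (c s) (c' s)).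
    pose proof (Rle_abs L). pose proof (Rabs_pos L). unfold m in *; cbv beta in *. nra. }
  assert (Hm0 : m umax <= 0).
  { assert (Rabs (umax - tau) <= h) by (apply Rabs_le; lra).
    pose proof (Rabs_pos L). pose proof (Rabs_pos (umax - tau)).
    assert (4 * Rabs L * Rabs (umax - tau) <= 1) by nra.
    pose proof (edist_ge_0 (c umax) (c' umax)). unfold m in *; cbv beta in *. nra. }
  exists h. split; [exact Hh|]. intros u Hu. apply edist_eq_0.
  apply Rle_antisym; [|apply edist_ge_0].
  apply (Rle_trans _ (m umax)); [apply Hmax; apply Rabs_def2 in Hu; lra | exact Hm0].
Qed.

Lemma solutions_agree c c' t0 : is_solution W c -> is_solution W c' -> c t0 = c' t0 ->
  forall t, c t = c' t.
Proof.
  intros Hc Hc' E0. apply (R_clopen (fun t => c t = c' t) t0 E0).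
  - intros tau Hadh. apply edist_eq_0, (continuity_pt_adherent_zero (fun s => edist (c s) (c' s))).
    + apply continuity_pt_edist_curves; apply solution_continuous; assumption.
    + intros eps Heps. destruct (Hadh eps Heps) as [u [Hu Eu]].
      exists u. split; [exact Hu|]. rewrite Eu. apply edist_refl.
  - intros tau Etau. apply solutions_agree_near; assumption.
Qed.

End Solutions.

(** * Flows *)

Lemma is_derive_locally_constant (h : R -> R) t l :
  locally t (fun s => h s = h t) -> is_derive h t l -> l = 0.
Proof.
  intros Hloc Hd. rewrite <- (is_derive_unique _ _ _ Hd).
  apply is_derive_unique, (is_derive_ext_loc (fun _ => h t)).
  - apply (filter_imp (fun s => h s = h t)); [|exact Hloc]. intros s Hs. symmetry. exact Hs.
  - apply is_derive_Reals, derivable_pt_lim_const.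
Qed.

Section Flow.

Variables (V : pt -> pt) (phi : R -> pt -> pt).
Hypotheses (V_C1 : C1_field V) (phi_flow : is_flow_of V phi).

Lemma flow_solution x : is_solution V (fun t => phi t x).
Proof. intros t. split; apply phi_flow. Qed.

Lemma flow_continuous x : continuous_curve (fun t => phi t x).
Proof. apply (solution_continuous V), flow_solution. Qed.

Lemma flow_add s t x : phi t (phi s x) = phi (t + s) x.
Proof.
  revert t. apply (solutions_agree V (C1_field_locally_lipschitz V V_C1) _ _ 0).
  - apply flow_solution.
  - apply (solution_shift V (fun t => phi t x)), flow_solution.
  - rewrite Rplus_0_l. apply phi_flow.
Qed.

Lemma flow_stationary_singular x sg :
  0 < sg -> (forall s, 0 < s < sg -> phi s x = x) -> singular V x.
Proof.
  intros Hsg Hfix.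
  assert (Hloc : locally 0 (fun s => x = phi s x)).
  { exists (mkposreal sg Hsg). intros s Hs.
    change (Rabs (s - 0) < sg) in Hs. rewrite Rminus_0_r in Hs.
    destruct (Rtotal_order s 0) as [Hneg | [-> | Hpos]].
    - rewrite <- (Hfix (- s)) at 2 by (apply Rabs_def2 in Hs; lra).
      rewrite flow_add, Rplus_opp_r. symmetry. apply phi_flow.
    - symmetry. apply phi_flow.
    - symmetry. apply Hfix. apply Rabs_def2 in Hs. lra. }
  destruct phi_flow as [Phi0 [D1 D2]].
  assert (Hloc1 : locally 0 (fun s => fst (phi s x) = fst (phi 0 x))).
  { apply (filter_imp (fun s => x = phi s x)); [|exact Hloc].
    intros s Hs. rewrite <- Hs, Phi0. reflexivity. }
  assert (Hloc2 : locally 0 (fun s => snd (phi s x) = snd (phi 0 x))).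
  { apply (filter_imp (fun s => x = phi s x)); [|exact Hloc].
    intros s Hs. rewrite <- Hs, Phi0. reflexivity. }
  pose proof (is_derive_locally_constant _ _ _ Hloc1 (D1 x 0)) as Z1.
  pose proof (is_derive_locally_constant _ _ _ Hloc2 (D2 x 0)) as Z2.
  rewrite Phi0 in Z1, Z2.
  unfold singular. rewrite (surjective_pairing (V x)), Z1, Z2. reflexivity.
Qed.

Lemma iterZ_flow f g : (forall x, f x = phi 1 x) -> (forall p, g (f p) = p) ->
  forall k x, iterZ f g k x = phi (IZR k) x.
Proof.
  intros Hf Hg.
  assert (Phi0 : forall x, phi 0 x = x) by apply phi_flow.
  (* a bare [iter_nat] would denote Coquelicot's homonym *)
  assert (Fwd : forall n x, Defs.iter_nat f n x = phi (INR n) x).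
  { induction n as [|n IH]; intros x; cbn [Defs.iter_nat].
    - symmetry. apply Phi0.
    - rewrite IH, Hf, flow_add, S_INR, Rplus_comm. reflexivity. }
  assert (Back : forall n x, Defs.iter_nat g n x = phi (- INR n) x).
  { induction n as [|n IH]; intros x; cbn [Defs.iter_nat].
    - rewrite INR_0, Ropp_0. symmetry. apply Phi0.
    - rewrite IH, <- (Hg (phi (- INR (S n)) x)), Hf, flow_add, S_INR.
      do 2 f_equal. ring. }
  intros [|p|p] x; simpl.
  - symmetry. apply Phi0.
  - rewrite Fwd, INR_IZR_INZ, positive_nat_Z. reflexivity.
  - rewrite Back, INR_IZR_INZ, positive_nat_Z. reflexivity.
Qed.

End Flow.

(** * Cluster points at infinity *)

Definition frequently (P : R -> Prop) : Prop := forall T, exists t, T <= t /\ P t.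

Lemma frequently_mono (P Q : R -> Prop) : (forall t, P t -> Q t) -> frequently P -> frequently Q.
Proof. intros PQ HP T. destruct (HP T) as [t [Ht Pt]]. exists t. auto. Qed.

Lemma not_frequently (P : R -> Prop) : ~ frequently P -> exists T, forall t, T <= t -> ~ P t.
Proof.
  intros NP. apply NNPP. intros NT. apply NP. intros T. apply NNPP. intros NE.
  apply NT. exists T. intros t Ht Pt. apply NE. exists t. auto.
Qed.

Lemma frequently_cluster_family (P : R -> R -> Prop) (u : R -> R) M :
  (forall d d' t, d <= d' -> P d t -> P d' t) ->
  (forall d, 0 < d -> frequently (P d)) ->
  (forall d t, 0 < d -> P d t -> Rabs (u t) <= M) ->
  exists a, forall d, 0 < d -> frequently (fun t => P d t /\ Rabs (u t - a) < d).
Proof.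
  intros Pmono Pfreq Pbound.
  (* [a] will be the upper limit of [u] along the family [P] *)
  set (A := fun a => forall d, 0 < d -> frequently (fun t => P d t /\ a <= u t)).
  destruct (completeness A) as [a [Aub Alub]].
  { exists M. intros a Ha. destruct (Ha 1 Rlt_0_1 0) as [t [_ [Pt Hat]]].
    pose proof (Pbound 1 t Rlt_0_1 Pt). pose proof (Rle_abs (u t)). lra. }
  { exists (- M). intros d Hd T. destruct (Pfreq d Hd T) as [t [Ht Pt]].
    exists t. pose proof (Pbound d t Hd Pt). pose proof (Rabs_maj2 (u t)).
    repeat split; [lra | exact Pt | lra]. }
  exists a. intros d Hd T.
  assert (Below : exists a', A a' /\ a - d < a').
  { apply NNPP. intros Hn. assert (a <= a - d); [|lra].
    apply Alub. intros a' Ha'. apply Rnot_lt_le. intros Hlt. apply Hn. exists a'. auto. }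
  destruct Below as [a' [Ha' Hlt]].
  assert (Above : exists d0 T0, 0 < d0 /\ forall t, T0 <= t -> P d0 t -> u t < a + d).
  { assert (NA : ~ A (a + d)) by (intros HA; specialize (Aub _ HA); lra).
    apply NNPP. intros Hn. apply NA. intros d0 Hd0. apply NNPP. intros NF.
    destruct (not_frequently _ NF) as [T0 HT0]. apply Hn. exists d0, T0. split; [exact Hd0|].
    intros t Ht Pt. apply Rnot_le_lt. intros Hle. apply (HT0 t Ht). auto. }
  destruct Above as [d0 [T0 [Hd0 HT0]]].
  destruct (Ha' (Rmin d d0) (Rmin_pos _ _ Hd Hd0) (Rmax T T0)) as [t [Ht [Pt Hut]]].
  pose proof (Rmax_l T T0). pose proof (Rmax_r T T0).
  pose proof (Rmin_l d d0). pose proof (Rmin_r d d0).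
  assert (u t < a + d) by (apply HT0; [lra | apply (Pmono (Rmin d d0)); assumption]).
  exists t. split; [lra|]. split; [apply (Pmono (Rmin d d0)); assumption|]. apply Rabs_def1; lra.
Qed.

Lemma frequently_cluster (P : R -> Prop) (c : R -> pt) z M : frequently P ->
  (forall t, P t -> edist (c t) z <= M) ->
  exists y, forall d, 0 < d -> frequently (fun t => P t /\ edist (c t) y < d).
Proof.
  intros Pfreq Pbound.
  destruct (frequently_cluster_family (fun _ t => P t) (fun t => fst (c t)) (Rabs (fst z) + M))
    as [a Ha].
  - auto.
  - intros d _. exact Pfreq.
  - intros d t _ Pt. pose proof (Pbound t Pt). pose proof (Rabs_fst_le_edist (c t) z).
    pose proof (Rabs_triang_inv (fst (c t)) (fst z)). lra.
  - destruct (frequently_cluster_family (fun d t => P t /\ Rabs (fst (c t) - a) < d)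
      (fun t => snd (c t)) (Rabs (snd z) + M)) as [b Hb].
    + intros d d' t Hdd' [Pt Ht]. split; [exact Pt | lra].
    + exact Ha.
    + intros d t _ [Pt _]. pose proof (Pbound t Pt). pose proof (Rabs_snd_le_edist (c t) z).
      pose proof (Rabs_triang_inv (snd (c t)) (snd z)). lra.
    + exists (a, b). intros d Hd.
      apply (frequently_mono
        (fun t => (P t /\ Rabs (fst (c t) - a) < d / 2) /\ Rabs (snd (c t) - b) < d / 2)).
      * intros t [[Pt H1] H2]. split; [exact Pt|].
        eapply Rle_lt_trans; [apply edist_le_Rabs_sum | simpl; lra].
      * apply Hb. lra.
Qed.

Lemma frequently_crossing (h : R -> R) r : (forall t, continuity_pt h t) ->
  frequently (fun t => h t < r) -> frequently (fun t => r < h t) -> frequently (fun t => h t = r).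
Proof.
  intros Hc Hlow Hhigh T.
  destruct (Hlow T) as [t1 [Ht1 Hlt]]. destruct (Hhigh (t1 + 1)) as [t2 [Ht2 Hgt]].
  destruct (IVT (fun s => h s - r) t1 t2) as [t [Ht Hr]]; [| lra | lra | lra |].
  - intros s. apply continuity_pt_minus; [apply Hc|].
    apply continuity_pt_const. intros ? ?. reflexivity.
  - exists t. split; lra.
Qed.

Definition cluster_at_infty (c : R -> pt) (y : pt) : Prop :=
  forall eps, 0 < eps -> frequently (fun t => edist (c t) y < eps).

Definition converges_to (c : R -> pt) (z : pt) : Prop :=
  forall eps, 0 < eps -> exists T, forall t, T <= t -> edist (c t) z < eps.

Lemma converges_to_unique_cluster c z : continuous_curve c -> cluster_at_infty c z ->
  (forall y, cluster_at_infty c y -> y = z) -> converges_to c z.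
Proof.
  intros Hc Hz Huniq eps Heps. apply NNPP. intros Hn.
  assert (Far : frequently (fun t => eps <= edist (c t) z)).
  { intros T. apply NNPP. intros NF. apply Hn. exists T. intros t Ht.
    apply Rnot_le_lt. intros Hle. apply NF. exists t. auto. }
  (* The curve keeps returning to the circle of radius [eps / 2] around [z]; by compactness
     of that circle, this produces a second cluster point. *)
  assert (Level : frequently (fun t => edist (c t) z = eps / 2)).
  { apply frequently_crossing.
    - intros t. apply (continuity_pt_edist_curves c (fun _ => z)); [exact Hc|].
      intros s e He. exists 1. split; [lra|]. intros u _. rewrite edist_refl. exact He.
    - apply Hz. lra.
    - revert Far. apply frequently_mono. intros t Ht. lra. }
  destruct (frequently_cluster _ c z (eps / 2) Level) as [y Hy]; [intros t -> ; lra |].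
  assert (y = z) as ->.
  { apply Huniq. intros d Hd. specialize (Hy d Hd). revert Hy.
    apply frequently_mono. intros t [_ Ht]. exact Ht. }
  destruct (Hy (eps / 2) ltac:(lra) 0) as [t [_ [Ht1 Ht2]]]. lra.
Qed.

(** * Slow orbits *)

Definition uniformly_continuous_curve (c : R -> pt) : Prop :=
  forall eps, 0 < eps -> exists d, 0 < d /\ forall t s, 0 < s < d -> edist (c t) (c (t + s)) < eps.

Definition slow_curve (e : pt -> R) (c : R -> pt) : Prop :=
  exists sg, 0 < sg /\ forall t s, 0 < s < sg -> edist (c t) (c (t + s)) < e (c t).

Lemma slow_curve_intro e c : (exists m, 0 < m /\ forall t, m <= e (c t)) ->
  uniformly_continuous_curve c -> slow_curve e c.
Proof.
  intros [m [Hm Hinf]] Hunif. destruct (Hunif m Hm) as [d [Hd D]].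
  exists d. split; [exact Hd|]. intros t s Hs. specialize (D t s Hs). specialize (Hinf t). lra.
Qed.

Lemma periodic_Z {A : Type} (F : R -> A) T : (forall u, F (u + T) = F u) ->
  forall k u, F (u + IZR k * T) = F u.
Proof.
  intros HT k. induction k as [|k IH|k IH] using Z.peano_ind; intros u.
  - f_equal. ring.
  - rewrite succ_IZR. replace (u + (IZR k + 1) * T) with (u + IZR k * T + T) by ring.
    rewrite HT. apply IH.
  - rewrite <- Z.sub_1_r, minus_IZR, <- HT.
    replace (u + (IZR k - 1) * T + T) with (u + IZR k * T) by ring.
    apply IH.
Qed.

Lemma periodic_reduce {A : Type} (F : R -> A) T : 0 < T -> (forall u, F (u + T) = F u) ->
  forall t, exists t0, 0 <= t0 <= T /\ forall s, F (t + s) = F (t0 + s).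
Proof.
  intros HT Hper t. set (k := Int_part (t / T)).
  destruct (base_Int_part (t / T)) as [Hk1 Hk2]. fold k in Hk1, Hk2.
  assert (Ht : t / T * T = t) by (field; lra).
  exists (t - IZR k * T). split.
  - split.
    + assert (IZR k * T <= t / T * T) by (apply Rmult_le_compat_r; lra). lra.
    + assert (t / T * T <= (IZR k + 1) * T) by (apply Rmult_le_compat_r; lra). lra.
  - intros s. rewrite <- (periodic_Z F T Hper k (t - IZR k * T + s)). f_equal. ring.
Qed.

Lemma periodic_curve_lower_bound (c : R -> pt) e T : continuous_curve c -> pos_cont e -> 0 < T ->
  (forall u, c (u + T) = c u) -> exists m, 0 < m /\ forall t, m <= e (c t).
Proof.
  intros Hc [He Hpos] HT Hper.
  destruct (positive_lower_bound_on (fun t => e (c t)) 0 T) as [m [Hm Hmin]].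
  - lra.
  - intros t. apply continuity_pt_comp_curve; [exact Hc | apply He].
  - intros t. apply Hpos.
  - exists m. split; [exact Hm|]. intros t.
    destruct (periodic_reduce c T HT Hper t) as [t0 [Ht0 Hred]].
    specialize (Hred 0). rewrite !Rplus_0_r in Hred. rewrite Hred. apply Hmin, Ht0.
Qed.

Lemma periodic_curve_uniformly_continuous (c : R -> pt) T : continuous_curve c -> 0 < T ->
  (forall u, c (u + T) = c u) -> uniformly_continuous_curve c.
Proof.
  intros Hc HT Hper eps Heps.
  destruct (continuous_curve_uniform_on c 0 (T + 1) eps Hc Heps) as [d [Hd D]].
  exists (Rmin 1 d). split; [apply Rmin_pos; lra|]. intros t s Hs.
  pose proof (Rmin_l 1 d). pose proof (Rmin_r 1 d).
  destruct (periodic_reduce c T HT Hper t) as [t0 [Ht0 Hred]].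
  pose proof (Hred 0) as Hred0. rewrite !Rplus_0_r in Hred0. rewrite Hred0, Hred.
  apply D; [lra | lra |]. replace (t0 - (t0 + s)) with (- s) by ring.
  rewrite Rabs_Ropp, Rabs_right; lra.
Qed.

Lemma limits_outside_interval (c : R -> pt) z1 z2 eps :
  converges_to c z2 -> converges_to (fun t => c (- t)) z1 -> 0 < eps ->
  exists a b, a <= b /\ (forall t, b <= t -> edist (c t) z2 < eps) /\
                        (forall t, t <= a -> edist (c t) z1 < eps).
Proof.
  intros H2 H1 Heps. destruct (H2 eps Heps) as [T2 HT2]. destruct (H1 eps Heps) as [T1 HT1].
  exists (Rmin (- T1) T2), (Rmax (- T1) T2).
  pose proof (Rmin_l (- T1) T2). pose proof (Rmin_r (- T1) T2).
  pose proof (Rmax_l (- T1) T2). pose proof (Rmax_r (- T1) T2).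
  split; [lra|]. split.
  - intros t Ht. apply HT2. lra.
  - intros t Ht. rewrite <- (Ropp_involutive t). apply HT1. lra.
Qed.

Lemma converging_curve_lower_bound (c : R -> pt) e z1 z2 : continuous_curve c -> pos_cont e ->
  converges_to c z2 -> converges_to (fun t => c (- t)) z1 ->
  exists m, 0 < m /\ forall t, m <= e (c t).
Proof.
  intros Hc [He Hpos] H2 H1.
  assert (Near : forall z, exists r, 0 < r /\ forall q, edist q z < r -> e z / 2 <= e q).
  { intros z. destruct (continuous_edist_ball e z (He z) (e z / 2)) as [r [Hr D]].
    - pose proof (Hpos z). lra.
    - exists r. split; [exact Hr|]. intros q Hq. specialize (D q Hq). apply Rabs_def2 in D. lra. }
  destruct (Near z1) as [r1 [Hr1 N1]]. destruct (Near z2) as [r2 [Hr2 N2]].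
  destruct (limits_outside_interval c z1 z2 (Rmin r1 r2) H2 H1 (Rmin_pos _ _ Hr1 Hr2))
    as [a [b [Hab [Hb Ha]]]].
  destruct (positive_lower_bound_on (fun t => e (c t)) a b Hab) as [m0 [Hm0 Hmin]].
  - intros t. apply continuity_pt_comp_curve; [exact Hc | apply He].
  - intros t. apply Hpos.
  - pose proof (Hpos z1). pose proof (Hpos z2).
    pose proof (Rmin_l r1 r2). pose proof (Rmin_r r1 r2).
    exists (Rmin m0 (Rmin (e z1 / 2) (e z2 / 2))).
    pose proof (Rmin_l m0 (Rmin (e z1 / 2) (e z2 / 2))).
    pose proof (Rmin_r m0 (Rmin (e z1 / 2) (e z2 / 2))).
    pose proof (Rmin_l (e z1 / 2) (e z2 / 2)). pose proof (Rmin_r (e z1 / 2) (e z2 / 2)).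
    split; [repeat apply Rmin_pos; lra|]. intros t.
    destruct (Rle_dec b t) as [Hbt|Hbt]; [|destruct (Rle_dec t a) as [Hta|Hta]].
    + specialize (N2 (c t) ltac:(specialize (Hb t Hbt); lra)). lra.
    + specialize (N1 (c t) ltac:(specialize (Ha t Hta); lra)). lra.
    + specialize (Hmin t ltac:(lra)). lra.
Qed.

Lemma converging_curve_uniformly_continuous (c : R -> pt) z1 z2 : continuous_curve c ->
  converges_to c z2 -> converges_to (fun t => c (- t)) z1 -> uniformly_continuous_curve c.
Proof.
  intros Hc H2 H1 eps Heps.
  destruct (limits_outside_interval c z1 z2 (eps / 2) H2 H1 ltac:(lra)) as [a [b [Hab [Hb Ha]]]].
  destruct (continuous_curve_uniform_on c (a - 1) (b + 1) eps Hc Heps) as [d [Hd D]].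
  exists (Rmin 1 d). split; [apply Rmin_pos; lra|]. intros t s Hs.
  pose proof (Rmin_l 1 d). pose proof (Rmin_r 1 d).
  destruct (Rle_dec b t) as [Hbt|Hbt]; [|destruct (Rle_dec (t + s) a) as [Hta|Hta]].
  - pose proof (Hb t Hbt). pose proof (Hb (t + s) ltac:(lra)).
    pose proof (edist_triangle (c t) z2 (c (t + s))). rewrite (edist_sym z2) in *. lra.
  - pose proof (Ha t ltac:(lra)). pose proof (Ha (t + s) Hta).
    pose proof (edist_triangle (c t) z1 (c (t + s))). rewrite (edist_sym z1) in *. lra.
  - apply D; [lra | lra |]. replace (t - (t + s)) with (- s) by ring.
    rewrite Rabs_Ropp, Rabs_right; lra.
Qed.

Definition expansive (f g : pt -> pt) (e : pt -> R) : Prop :=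
  forall x y, x <> y ->
  exists k : Z, edist (iterZ f g k x) (iterZ f g k y) > e (iterZ f g k x).

Lemma expansive_slow_orbit_singular V phi f g e x : C1_field V -> is_flow_of V phi ->
  (forall x, f x = phi 1 x) -> (forall p, g (f p) = p) -> expansive f g e ->
  slow_curve e (fun t => phi t x) -> singular V x.
Proof.
  intros HV Hphi Hf Hg Hexp [sg [Hsg Hslow]].
  destruct (classic (forall s, 0 < s < sg -> phi s x = x)) as [Hfix | Hmove].
  - exact (flow_stationary_singular V phi HV Hphi x sg Hsg Hfix).
  - apply not_all_ex_not in Hmove. destruct Hmove as [s Hs]. apply imply_to_and in Hs.
    destruct Hs as [Hs Hne].
    destruct (Hexp x (phi s x) (not_eq_sym Hne)) as [k Hk].
    rewrite !(iterZ_flow V phi HV Hphi f g Hf Hg), (flow_add V phi HV Hphi) in Hk.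
    specialize (Hslow (IZR k) s Hs). lra.
Qed.

Lemma omega_lim_singleton_converges phi x z : continuous_curve (fun t => phi t x) ->
  (forall y, omega_lim phi x y <-> y = z) -> converges_to (fun t => phi t x) z.
Proof.
  intros Hc Homega. apply converges_to_unique_cluster; [exact Hc | |].
  - intros eps Heps T. apply (proj2 (Homega z) eq_refl eps T Heps).
  - intros y Hy. apply Homega. intros eps T Heps. exact (Hy eps Heps T).
Qed.

Lemma alpha_lim_singleton_converges phi x z : continuous_curve (fun t => phi t x) ->
  (forall y, alpha_lim phi x y <-> y = z) -> converges_to (fun t => phi (- t) x) z.
Proof.
  intros Hc Halpha. apply converges_to_unique_cluster; [apply (continuous_curve_opp _ Hc) | |].
  - intros eps Heps T. destruct (proj2 (Halpha z) eq_refl eps (- T) Heps) as [t [Ht Hd]].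
    exists (- t). rewrite Ropp_involutive. split; [lra | exact Hd].
  - intros y Hy. apply Halpha. intros eps T Heps. destruct (Hy eps Heps (- T)) as [t [Ht Hd]].
    exists (- t). split; [lra | exact Hd].
Qed.

Theorem mainTheorem16 (f : pt -> pt) (V : pt -> pt) (phi : R -> pt -> pt) :
  TA f -> C1_field V -> is_flow_of V phi -> (forall x, f x = phi 1 x) ->
  (forall x T, 0 < T -> phi T x = x -> singular V x) /\
  (~ exists x x1 x2, finite_connection V phi x x1 x2).
Proof.
  intros [g [[_ [_ [Hg _]]] [[e [He Hexp]] _]]] HV Hphi Hf.
  pose proof (flow_continuous V phi Hphi) as Hcont.
  split.
  - intros x T HT Hper.
    assert (Hper' : forall u, phi (u + T) x = phi u x)
      by (intros u; rewrite <- (flow_add V phi HV Hphi), Hper; reflexivity).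
    apply (expansive_slow_orbit_singular V phi f g e x HV Hphi Hf Hg Hexp), slow_curve_intro.
    + exact (periodic_curve_lower_bound _ e T (Hcont x) He HT Hper').
    + exact (periodic_curve_uniformly_continuous _ T (Hcont x) HT Hper').
  - intros [x [x1 [x2 [Hns [_ [_ [Halpha Homega]]]]]]].
    pose proof (omega_lim_singleton_converges phi x x2 (Hcont x) Homega) as Conv2.
    pose proof (alpha_lim_singleton_converges phi x x1 (Hcont x) Halpha) as Conv1.
    apply Hns, (expansive_slow_orbit_singular V phi f g e x HV Hphi Hf Hg Hexp), slow_curve_intro.
    + exact (converging_curve_lower_bound _ e x1 x2 (Hcont x) He Conv2 Conv1).
    + exact (converging_curve_uniformly_continuous _ x1 x2 (Hcont x) Conv2 Conv1).
Qed.
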